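(* Consider $n$ agents $\mathcal{V}=\{1,\dots,n\}$ with Lagrangian dynamics $M_i(q_i)\ddot q_i+C_i(q_i,\dot q_i)\dot q_i=\tau_i$, $q_i\in\mathbb{R}^m$, with $M_i(q_i)$ symmetric positive definite. Let $\mathcal{X}_1,\dots,\mathcal{X}_n\subseteq\mathbb{R}^m$ be closed convex sets with $\mathcal{X}_0=\bigcap_{i}\mathcal{X}_i$ nonempty and bounded. Let $\sigma:[t_0,\infty)\to\mathcal{P}$ be a piecewise constant switching signal taking values in a finite set $\mathcal{P}$ of undirected graphs on $\mathcal{V}$, with switching times $t_0<t_1<t_2<\dots$ satisfying $\inf_l(t_{l+1}-t_l)\ge\tau_d>0$; let $\mathcal{N}_i(\sigma(t))$ be the neighbor set of $i$ in $\mathcal{G}_{\sigma(t)}$. Let $a_{ij}(t)=a_{ji}(t)$ be continuous weights with $a_*\le a_{ij}(t)\le a^*$ for all $i,j$ and all $t\ge0$, where $a_*,a^*>0$ are constants. Apply the control $$\tau_i=C_i(q_i,\dot q_i)\dot q_i-kM_i(q_i)\dot q_i-M_i(q_i)(q_i-P_{\mathcal{X}_i}(q_i))-M_i(q_i)\sum_{j\in\mathcal{N}_i(\sigma(t))}a_{ij}(t)(q_i-q_j),$$ so that the closed loop is $\ddot q_i=-k\dot q_i-\sum_{j\in\mathcal{N}_i(\sigma(t))}a_{ij}(t)(q_i-q_j)-(q_i-P_{\mathcal{X}_i}(q_i))$. Then for all sufficiently large $k>0$, every solution satisfies $\lim_{t\to\infty}\|q_i(t)\|_{\mathcal{X}_i}=0$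 and $\lim_{t\to\infty}\dot q_i(t)=0$ for all $i\in\mathcal{V}$.
   Context: $\|\cdot\|$ is the Euclidean norm, $\|x\|_{\mathcal{S}}=\inf_{y\in\mathcal{S}}\|x-y\|$, and $P_{\mathcal{S}}(x)$ is the Euclidean projection of $x$ onto a closed convex set $\mathcal{S}$. *)

From HB Require Import structures.
From mathcomp Require Import all_boot all_order all_algebra.
From mathcomp Require Import all_classical all_reals all_analysis.
Set Implicit Arguments. Unset Strict Implicit. Unset Printing Implicit Defensive.
Import Order.TTheory GRing.Theory Num.Theory.
Import numFieldNormedType.Exports.
Local Open Scope classical_set_scope.
Local Open Scope ring_scope.

Definition enorm (R : realType) (m : nat) (x : 'cV[R]_m) : R :=
  Num.sqrt (\sum_(j < m) x j 0 ^+ 2).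

Definition setdist (R : realType) (m : nat) (S : set 'cV[R]_m) (x : 'cV[R]_m) : R :=
  inf [set enorm (x - y) | y in S].

Definition is_proj (R : realType) (m : nat) (S : set 'cV[R]_m) (x p : 'cV[R]_m) : Prop :=
  S p /\ forall y, S y -> enorm (x - p) <= enorm (x - y).

(* P_S(x): the (unique, for S nonempty closed convex) Euclidean projection *)
Definition proj (R : realType) (m : nat) (S : set 'cV[R]_m) (x : 'cV[R]_m) : 'cV[R]_m :=
  xget x [set p | is_proj S x p].

Definition convex_cv (R : realType) (m : nat) (S : set 'cV[R]_m) : Prop :=
  forall x y (l : R), S x -> S y -> 0 <= l -> l <= 1 ->
    S (l *: x + (1 - l) *: y).

Definition ebounded (R : realType) (m : nat) (S : set 'cV[R]_m) : Prop :=
  exists r : R, forall x, S x -> enorm x <= r.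

Definition sym_posdef (R : realType) (m : nat) (A : 'M[R]_m) : Prop :=
  A^T = A /\ forall x : 'cV[R]_m, x != 0 -> 0 < (x^T *m A *m x) 0 0.

Definition graph (n : nat) := {set 'I_n * 'I_n}.

Definition undirected (n : nat) (G : graph n) : Prop :=
  (forall i j, ((i, j) \in G) = ((j, i) \in G)) /\ (forall i, (i, i) \notin G).

Definition neighbors (n : nat) (G : graph n) (i : 'I_n) : {set 'I_n} :=
  [set j | (i, j) \in G].

Definition switching_signal (R : realType) (n : nat) (P : {set graph n})
    (sigma : R -> graph n) (t0 taud : R) (ts : nat -> R) : Prop :=
  [/\ ts 0%N = t0,
      forall l, ts l < ts l.+1,
      forall l, taud <= ts l.+1 - ts l,
      forall l t, ts l <= t -> t < ts l.+1 -> sigma t = sigma (ts l)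
    & forall t, t0 <= t -> sigma t \in P].

Definition control (R : realType) (n m : nat)
    (M : 'I_n -> 'cV[R]_m -> 'M[R]_m) (C : 'I_n -> 'cV[R]_m -> 'cV[R]_m -> 'M[R]_m)
    (X : 'I_n -> set 'cV[R]_m) (sigma : R -> graph n) (a : 'I_n -> 'I_n -> R -> R)
    (k : R) (q qd : 'I_n -> R -> 'cV[R]_m) (i : 'I_n) (t : R) : 'cV[R]_m :=
  C i (q i t) (qd i t) *m qd i t
  - k *: (M i (q i t) *m qd i t)
  - M i (q i t) *m (q i t - proj (X i) (q i t))
  - M i (q i t) *m (\sum_(j in neighbors (sigma t) i) a i j t *: (q i t - q j t)).

From Pilot Require Import Defs.
From HB Require Import structures.
From mathcomp Require Import all_boot all_order all_algebra.
From mathcomp Require Import all_classical all_reals all_analysis.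
From mathcomp Require Import ring lra.
Import Order.TTheory GRing.Theory Num.Theory.
Import numFieldNormedType.Exports.
Local Open Scope classical_set_scope.
Local Open Scope ring_scope.
Set Implicit Arguments. Unset Strict Implicit. Unset Printing Implicit Defensive.

(* Fix c in the intersection of the constraint sets.  Along a solution, the energy
   V = sum_i (|qd_i + (q_i - c)|^2 / 2 + (k - 1) / 2 |q_i - c|^2)
   decreases at rate at least half of sum_i (|qd_i|^2 + |q_i - P_i q_i|^2) as soon as
   k >= 3 + 4 n a^*: the projection terms are controlled by the variational inequality
   <q - P q, c - P q> <= 0, and the coupling terms form, by symmetry of the weights, a
   nonnegative Laplacian energy whose square is bounded by n a^* times itself.  The dwell
   time leaves only finitely many switching instants in any bounded interval, where V is
   merely continuous.  Hence V is bounded, positions and velocities are bounded, both are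
   uniformly Lipschitz, and a Barbalat-type argument makes the distances to the sets and
   the velocities tend to zero. *)

Lemma continuous_sum (T : topologicalType) (R : realType) (I : Type) (r : seq I)
    (P : pred I) (f : I -> T -> R) :
  (forall i, continuous (f i)) -> continuous (fun t => \sum_(i <- r | P i) f i t).
Proof.
move=> fc; elim: r => [|i r IH].
  have -> : (fun t => \sum_(i <- [::] | P i) f i t) = fun=> 0.
    by apply/funext => t; rewrite big_nil.
  exact: cst_continuous.
have -> : (fun t => \sum_(j <- i :: r | P j) f j t) =
    fun t => (if P i then f i t else 0) + \sum_(j <- r | P j) f j t.
  by apply/funext => t; rewrite big_cons; case: (P i); rewrite ?add0r.
move=> t; apply: continuousD (IH t).
by case: (P i); [exact: fc | exact: cst_continuous].
Qed.

Section Euclidean.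
Variables (R : realType) (m : nat).
Implicit Types (x y : 'cV[R]_m).

Definition sqnorm x : R := \sum_(j < m) x j 0 ^+ 2.
Definition dotp x y : R := \sum_(j < m) x j 0 * y j 0.

Lemma sqnorm_ge0 x : 0 <= sqnorm x.
Proof. by apply: sumr_ge0 => j _; exact: sqr_ge0. Qed.

Lemma enorm_ge0 x : 0 <= enorm x.
Proof. exact: sqrtr_ge0. Qed.

Lemma enorm_sqr x : enorm x ^+ 2 = sqnorm x.
Proof. by rewrite sqr_sqrtr // sqnorm_ge0. Qed.

Lemma sqnormDZ x y (t : R) :
  sqnorm (x + t *: y) = sqnorm x + 2 * t * dotp x y + t ^+ 2 * sqnorm y.
Proof.
rewrite /sqnorm /dotp !mulr_sumr -!big_split /=; apply: eq_bigr => j _.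
by rewrite !mxE; ring.
Qed.

Lemma sqnorm_eq0 x : sqnorm x = 0 -> forall j, x j 0 = 0.
Proof.
move=> /eqP; rewrite psumr_eq0 => [/allP x0 j|j _]; last exact: sqr_ge0.
by apply/eqP; rewrite -sqrf_eq0; apply: x0; rewrite mem_index_enum.
Qed.

Lemma dotp_sqr_le x y : dotp x y ^+ 2 <= sqnorm x * sqnorm y.
Proof.
have [y0|yn0] := eqVneq (sqnorm y) 0.
  have -> : dotp x y = 0 by rewrite /dotp big1 // => j _; rewrite (sqnorm_eq0 y0) mulr0.
  by rewrite expr0n /= mulr_ge0 // sqnorm_ge0.
(* minimize [sqnorm (x + t *: y)] over [t] *)
have := sqnorm_ge0 (x + (- (dotp x y / sqnorm y)) *: y).
rewrite sqnormDZ => H; rewrite -subr_ge0.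
have -> : sqnorm x * sqnorm y - dotp x y ^+ 2 = sqnorm y *
    (sqnorm x + 2 * - (dotp x y / sqnorm y) * dotp x y
     + (- (dotp x y / sqnorm y)) ^+ 2 * sqnorm y).
  by field; rewrite yn0.
by rewrite mulr_ge0 ?sqnorm_ge0.
Qed.

Lemma dotp_le x y : dotp x y <= enorm x * enorm y.
Proof.
apply: (le_trans (ler_norm _)).
rewrite -(sqrtr_sqr (dotp x y)) -sqrtrM ?sqnorm_ge0 //.
by rewrite ler_sqrt ?mulr_ge0 ?sqnorm_ge0 // dotp_sqr_le.
Qed.

Lemma enormD x y : enorm (x + y) <= enorm x + enorm y.
Proof.
have e0 : 0 <= enorm x + enorm y by rewrite addr_ge0 // enorm_ge0.
have xy : sqnorm (x + y) = sqnorm x + 2 * dotp x y + sqnorm y.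
  by rewrite -[y in LHS]scale1r sqnormDZ; ring.
rewrite -[leRHS]ger0_norm // -sqrtr_sqr ler_sqrt ?sqr_ge0 //.
rewrite -/(sqnorm _) xy sqrrD !enorm_sqr.
have := dotp_le x y; lra.
Qed.

Lemma enormN x : enorm (- x) = enorm x.
Proof. by congr Num.sqrt; apply: eq_bigr => j _; rewrite mxE sqrrN. Qed.

Lemma coord_le_enorm x j : `|x j 0| <= enorm x.
Proof.
rewrite -sqrtr_sqr ler_sqrt ?sqnorm_ge0 //.
by rewrite /sqnorm (bigD1 j) //= lerDl; apply: sumr_ge0 => i _; exact: sqr_ge0.
Qed.

Lemma enorm_le_sum x : enorm x <= \sum_(j < m) `|x j 0|.
Proof.
have S0 : 0 <= \sum_(j < m) `|x j 0| by apply: sumr_ge0.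
rewrite -[leRHS]ger0_norm // -sqrtr_sqr ler_sqrt ?sqr_ge0 // /sqnorm expr2 mulr_suml.
apply: ler_sum => j _; rewrite -real_normK ?num_real // expr2 ler_wpM2l //.
by rewrite (bigD1 j) //= lerDl; apply: sumr_ge0.
Qed.

Lemma continuous_enormB x : continuous (fun y => enorm (x - y)).
Proof.
have cs : continuous (fun z : 'cV[R]_m => \sum_(j < m) (x - z) j 0 ^+ 2).
  apply: continuous_sum => j z /=.
  have -> : (fun z : 'cV[R]_m => (x - z) j 0 ^+ 2) =
      (fun w : R => w ^+ 2) \o fun z : 'cV[R]_m => x j 0 - z j 0.
    by apply/funext => w; rewrite /= !mxE.
  apply: continuous_comp; last exact: exprn_continuous.
  by apply: continuousB; [exact: cst_continuous | exact: coord_continuous].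
by move=> y; exact: (continuous_comp (cs y) (@sqrt_continuous R _)).
Qed.

End Euclidean.

Lemma trmx_continuous (R : realType) (m n : nat) :
  continuous (fun A : 'M[R]_(m, n) => A^T).
Proof.
move=> A U /nbhs_ballP [e e0 eU]; apply/nbhs_ballP; exists e => // B [_ AB].
by apply: eU; split => // i j; rewrite !mxE; exact: AB.
Qed.

Section Projection.
Variables (R : realType) (m : nat) (S : set 'cV[R]_m).
Implicit Types (x y z p : 'cV[R]_m).

Lemma is_proj_exists x : closed S -> S !=set0 -> exists p, is_proj S x p.
Proof.
move=> cS [y0 Sy0]; set d := enorm (x - y0).
set K := [set y | S y /\ enorm (x - y) <= d].
have cK : closed K.
  apply: closedI => //.
  apply: (@preimage_closed _ _ (fun y => enorm (x - y)) [set r | r <= d]).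
    by move=> z _; exact: continuous_enormB.
  exact: closed_le.
(* compactness of bounded closed sets is available for row vectors *)
set K' := [set v : 'rV[R]_m | K v^T].
have cK' : closed K'.
  apply: (@preimage_closed _ _ (fun v : 'rV[R]_m => v^T) K) => //.
  by move=> v _; exact: trmx_continuous.
have bK' : bounded_set K'.
  rewrite /= /bounded_near; near=> M => v [Sv Hv].
  rewrite /= [`|v|]/Num.Def.normr /= mx_normrE; apply: bigmax_le.
    by near: M; apply: nbhs_pinfty_ge; rewrite num_real.
  move=> [i j] _ /=; rewrite (ord1 i).
  apply: (le_trans (_ : _ <= enorm v^T)).
    by have := coord_le_enorm v^T j; rewrite mxE.
  rewrite -[v^T](subKr x); apply: (le_trans (enormD _ _)).
  rewrite enormN; have : enorm x + d <= M.
    by near: M; apply: nbhs_pinfty_ge; rewrite num_real.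
  lra.
have coK : compact K.
  have -> : K = [set v^T | v in K'].
    apply/seteqP; split => y; last by move=> [v Kv <-].
    by move=> Ky; exists y^T; rewrite /K' /= ?trmxK.
  apply: continuous_compact; last exact: bounded_closed_compact.
  by apply: continuous_subspaceT => v; exact: trmx_continuous.
have K0 : K !=set0 by exists y0.
have [p pK pmin] :=
  compact_EVT_min K0 coK (continuous_subspaceT (@continuous_enormB _ _ x)).
move: pK; rewrite inE => -[Sp _]; exists p; split => // y Sy; have [Ky|nKy] := pselect (K y).
  by apply: pmin; rewrite inE.
apply: (le_trans (_ : _ <= d)); first by apply: pmin; rewrite inE.
by rewrite leNgt; apply/negP => /ltW yd; apply: nKy.
Unshelve. all: by end_near.
Qed.

Lemma is_proj_proj x : closed S -> S !=set0 -> is_proj S x (Defs.proj S x).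
Proof. by move=> cS S0; apply: xgetPex; exact: is_proj_exists. Qed.

Lemma is_proj_dotp_le0 x p y :
  convex_cv S -> is_proj S x p -> S y -> dotp (x - p) (y - p) <= 0.
Proof.
move=> cvS [Sp pmin] Sy; set D := dotp (x - p) (y - p); set Q := sqnorm (y - p).
rewrite leNgt; apply/negP => D0.
have Q0 : 0 <= Q by exact: sqnorm_ge0.
(* moving from [p] towards [y] by [l = D / (D + Q)] strictly decreases the distance to [x] *)
set l := D / (D + Q).
have l0 : 0 < l by rewrite divr_gt0 //; lra.
have l1 : l <= 1 by rewrite ler_pdivrMr ?mul1r; lra.
have lDQ : l * (D + Q) = D by rewrite /l mulfVK //; lra.
have := pmin _ (cvS _ _ _ Sy Sp (ltW l0) l1).
have -> : x - (l *: y + (1 - l) *: p) = (x - p) + (- l) *: (y - p).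
  by apply/matrixP => i j; rewrite !mxE; ring.
move=> H; have : sqnorm (x - p) <= sqnorm ((x - p) + (- l) *: (y - p)).
  by rewrite -!enorm_sqr; have := enorm_ge0 (x - p); nra.
rewrite sqnormDZ -/D -/Q; nra.
Qed.

Lemma is_proj_sqnorm_le_dotp x p y :
  convex_cv S -> is_proj S x p -> S y -> sqnorm (x - p) <= dotp (x - p) (x - y).
Proof.
move=> cvS xp Sy; have := is_proj_dotp_le0 cvS xp Sy.
have -> : dotp (x - p) (x - y) = sqnorm (x - p) - dotp (x - p) (y - p).
  by rewrite /dotp /sqnorm -sumrB; apply: eq_bigr => j _; rewrite !mxE; ring.
lra.
Qed.

Lemma setdist_le_enorm x p : S p -> setdist S x <= enorm (x - p).
Proof.
move=> Sp; apply: ge_inf; last by exists p.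
by exists 0 => r [y _ <-]; exact: enorm_ge0.
Qed.

Lemma setdist_ge0 x : S !=set0 -> 0 <= setdist S x.
Proof.
move=> [y Sy]; apply: lb_le_inf; first by exists (enorm (x - y)), y.
by move=> r [z _ <-]; exact: enorm_ge0.
Qed.

Lemma setdist_le_enormD x z : S !=set0 -> setdist S z <= enorm (z - x) + setdist S x.
Proof.
move=> [y0 Sy0]; rewrite -lerBlDl; apply: lb_le_inf; first by exists (enorm (x - y0)), y0.
move=> r [y Sy <-]; rewrite lerBlDl; apply: (le_trans (setdist_le_enorm z Sy)).
by rewrite -[z - y](subrKA x); exact: enormD.
Qed.

End Projection.

Lemma sqr_sum_le (R : realFieldType) (N : nat) (x : 'I_N -> R) :
  (\sum_(i < N) x i) ^+ 2 <= N%:R * \sum_(i < N) x i ^+ 2.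
Proof.
rewrite expr2 mulr_suml; under eq_bigr do rewrite mulr_sumr.
apply: (@le_trans _ _ (\sum_(i < N) \sum_(j < N) (x i ^+ 2 + x j ^+ 2) / 2)).
  by apply: ler_sum => i _; apply: ler_sum => j _; have := sqr_ge0 (x i - x j); lra.
have E i : \sum_(j < N) (x i ^+ 2 + x j ^+ 2) / 2 =
    (N%:R * x i ^+ 2 + \sum_(j < N) x j ^+ 2) / 2.
  by rewrite -mulr_suml big_split /= sumr_const card_ord mulr_natl.
under eq_bigr do rewrite E.
rewrite -mulr_suml big_split /= sumr_const card_ord -mulr_sumr -mulr_natl; lra.
Qed.

Lemma young_cross (R : realFieldType) (k x y e : R) : 1 < k ->
  (x + e) * (- (k * x + y) + x) + (k - 1) * e * x <=
  - ((k - 1) / 2) * x ^+ 2 + 1 / (2 * (k - 1)) * y ^+ 2 - y * e.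
Proof.
move=> k1.
have : 0 <= ((k - 1) * x + y) ^+ 2 / (2 * (k - 1)) by rewrite divr_ge0 ?sqr_ge0 //; lra.
have -> : ((k - 1) * x + y) ^+ 2 / (2 * (k - 1)) =
    (k - 1) / 2 * x ^+ 2 + x * y + 1 / (2 * (k - 1)) * y ^+ 2.
  by field; lra.
lra.
Qed.

Definition laplacian (R : pzRingType) (n m : nat) (F : 'I_n -> 'I_n -> R)
  (x : 'I_n -> 'I_m -> R) (i : 'I_n) (j : 'I_m) : R := \sum_(l < n) F i l * (x i j - x l j).

Definition dirichlet_energy (R : pzRingType) (n m : nat) (F : 'I_n -> 'I_n -> R)
  (x : 'I_n -> 'I_m -> R) : R :=
  \sum_(i < n) \sum_(l < n) \sum_(j < m) F i l * (x i j - x l j) ^+ 2.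

Section Laplacian.
Variables (R : realFieldType) (n m : nat) (F : 'I_n -> 'I_n -> R) (x : 'I_n -> 'I_m -> R).

Lemma laplacian_dotE (c : 'I_m -> R) : (forall i l, F i l = F l i) ->
  2 * \sum_(i < n) \sum_(j < m) laplacian F x i j * (x i j - c j) = dirichlet_energy F x.
Proof.
move=> F_sym; set T := \sum_(i < n) \sum_(j < m) _.
have TA : T = \sum_(i < n) \sum_(l < n) \sum_(j < m) F i l * (x i j - x l j) * (x i j - c j).
  apply: eq_bigr => i _; rewrite exchange_big /=; apply: eq_bigr => j _.
  by rewrite mulr_suml.
(* swapping [i] and [l] with [F] symmetric *)
have TB : T = \sum_(i < n) \sum_(l < n) \sum_(j < m) - (F i l * (x i j - x l j) * (x l j - c j)).
  rewrite TA exchange_big /=; apply: eq_bigr => i _; apply: eq_bigr => l _.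
  by apply: eq_bigr => j _; rewrite F_sym; ring.
rewrite mulr2n mulrDl mul1r {1}TA TB -big_split /=; apply: eq_bigr => i _.
rewrite -big_split /=; apply: eq_bigr => l _; rewrite -big_split /=.
by apply: eq_bigr => j _; ring.
Qed.

Variable ah : R.
Hypothesis F_bnd : forall i l, 0 <= F i l <= ah.

Lemma dirichlet_energy_ge0 : 0 <= dirichlet_energy F x.
Proof.
apply: sumr_ge0 => i _; apply: sumr_ge0 => l _; apply: sumr_ge0 => j _.
by rewrite mulr_ge0 ?sqr_ge0 //; case/andP: (F_bnd i l).
Qed.

Lemma sum_sqr_laplacian_le :
  \sum_(i < n) \sum_(j < m) laplacian F x i j ^+ 2 <= n%:R * ah * dirichlet_energy F x.
Proof.
rewrite mulr_sumr; apply: ler_sum => i _.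
rewrite exchange_big /= mulr_sumr; apply: ler_sum => j _.
apply: (le_trans (sqr_sum_le _)); rewrite -mulrA; apply: ler_wpM2l => //.
rewrite mulr_sumr; apply: ler_sum => l _.
have /andP [F0 Fa] := F_bnd i l.
have Fd : 0 <= ah - F i l by rewrite subr_ge0.
have := mulr_ge0 (mulr_ge0 Fd F0) (sqr_ge0 (x i j - x l j)).
by rewrite exprMn; nra.
Qed.

End Laplacian.

Lemma ler_sum_term (R : numDomainType) (n : nat) (f : 'I_n -> R) (i : 'I_n) :
  (forall i, 0 <= f i) -> f i <= \sum_(i < n) f i.
Proof. by move=> f0; rewrite (bigD1 i) //= lerDl sumr_ge0. Qed.

Lemma ler_sum2_term (R : numDomainType) (n m : nat) (f : 'I_n -> 'I_m -> R) i j :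
  (forall i j, 0 <= f i j) -> f i j <= \sum_(i < n) \sum_(j < m) f i j.
Proof.
move=> f0; apply: le_trans (ler_sum_term j (f0 i)) _.
by apply: (ler_sum_term (f := fun i => \sum_(j < m) f i j)) => i'; exact: sumr_ge0.
Qed.

Lemma sum2_affine (R : realFieldType) (n m : nat) (f g h : 'I_n -> 'I_m -> R) (a b : R) :
  \sum_(i < n) \sum_(j < m) (a * f i j + b * g i j - h i j) =
  a * \sum_(i < n) \sum_(j < m) f i j + b * \sum_(i < n) \sum_(j < m) g i j
  - \sum_(i < n) \sum_(j < m) h i j.
Proof.
rewrite !mulr_sumr -big_split -sumrB /=; apply: eq_bigr => i _.
by rewrite !mulr_sumr -big_split -sumrB.
Qed.

Lemma dissipation_le (R : realFieldType) (n m : nat) (k ah : R) (F : 'I_n -> 'I_n -> R)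
    (v r x : 'I_n -> 'I_m -> R) (c : 'I_m -> R) :
  (forall i l, F i l = F l i) -> (forall i l, 0 <= F i l <= ah) -> 0 <= ah ->
  (forall i, \sum_(j < m) r i j ^+ 2 <= \sum_(j < m) r i j * (x i j - c j)) ->
  3 + 4 * n%:R * ah <= k ->
  \sum_(i < n) \sum_(j < m)
     ((v i j + (x i j - c j)) * (- (k * v i j + r i j + laplacian F x i j)
        + v i j) + (k - 1) * (x i j - c j) * v i j)
   <= - (1/2) * (\sum_(i < n) \sum_(j < m) v i j ^+ 2 + \sum_(i < n) \sum_(j < m) r i j ^+ 2).
Proof.
move=> F_sym F_bnd ah0 r_dot kb.
have nah : 0 <= n%:R * ah by rewrite mulr_ge0.
set s := laplacian F x.
set e := fun i j => x i j - c j.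
set g := fun i j => r i j + s i j.
set V := \sum_(i < n) \sum_(j < m) v i j ^+ 2.
set Rr := \sum_(i < n) \sum_(j < m) r i j ^+ 2.
set G := \sum_(i < n) \sum_(j < m) g i j ^+ 2.
set T := \sum_(i < n) \sum_(j < m) s i j * e i j.
have V0 : 0 <= V by apply: sumr_ge0 => i _; apply: sumr_ge0 => j _; exact: sqr_ge0.
have Rr0 : 0 <= Rr by apply: sumr_ge0 => i _; apply: sumr_ge0 => j _; exact: sqr_ge0.
have TE : 2 * T = dirichlet_energy F x by exact: laplacian_dotE.
have T0 : 0 <= T by have := dirichlet_energy_ge0 x F_bnd; rewrite -TE; lra.
have young : \sum_(i < n) \sum_(j < m)
    ((v i j + e i j) * (- (k * v i j + r i j + s i j) + v i j) + (k - 1) * e i j * v i j)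
    <= - ((k - 1) / 2) * V + 1 / (2 * (k - 1)) * G
       - \sum_(i < n) \sum_(j < m) g i j * e i j.
  rewrite -sum2_affine; apply: ler_sum => i _; apply: ler_sum => j _.
  rewrite -addrA; apply: young_cross; lra.
have ge_split : \sum_(i < n) \sum_(j < m) g i j * e i j =
    \sum_(i < n) \sum_(j < m) r i j * e i j + T.
  rewrite -big_split /=; apply: eq_bigr => i _; rewrite -big_split /=.
  by apply: eq_bigr => j _; rewrite mulrDl.
have re : Rr <= \sum_(i < n) \sum_(j < m) r i j * e i j by apply: ler_sum => i _; exact: r_dot.
have G_le : G <= 2 * Rr + 4 * (n%:R * ah) * T.
  have G2 : G <= 2 * Rr + 2 * \sum_(i < n) \sum_(j < m) s i j ^+ 2.
    rewrite /G /Rr !mulr_sumr -big_split /=; apply: ler_sum => i _.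
    rewrite !mulr_sumr -big_split /=; apply: ler_sum => j _.
    by rewrite /g; have := sqr_ge0 (r i j - s i j); nra.
  have := sum_sqr_laplacian_le x F_bnd; rewrite -/s -TE; nra.
have k1 : 2 <= k - 1 by lra.
have G_le' : 1 / (2 * (k - 1)) * G <= (Rr + T) / 2.
  rewrite mul1r ler_pdivrMl; last lra.
  by apply: le_trans G_le _; nra.
move: young; rewrite ge_split -/e -/s; nra.
Qed.

Section PiecewiseCalculus.
Variable R : realType.
Implicit Types (f : R -> R) (s : seq R) (K u w : R).

Lemma sub_le_of_is_derive_le f s K u w : u <= w ->
  {within `[u, w], continuous f} ->
  (forall t, u < t -> t < w -> t \notin s -> exists2 df, is_derive t 1 f df & df <= K) ->
  f w - f u <= K * (w - u).
Proof.
elim: s u w => [|e s IH] u w uw cf df.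
  have [uw'|wu] := ltP u w; last first.
    have -> : w = u by apply/eqP; rewrite eq_le uw wu.
    by rewrite !subrr mulr0.
  have dfI x : x \in `]u, w[ -> is_derive x 1 f ('D_1 f x) /\ 'D_1 f x <= K.
    rewrite in_itv /= => /andP [ux xw]; have [d fd dK] := df x ux xw isT.
    by rewrite derive_val.
  have [c cI ->] := MVT uw' (fun x xI => (dfI x xI).1) cf.
  by rewrite ler_wpM2r ?subr_ge0 ?(dfI c cI).2 // ltW.
have [/andP [ue ew]|eI] := boolP ((u < e) && (e < w)).
  have -> : f w - f u = (f w - f e) + (f e - f u) by rewrite addrA subrK.
  have -> : K * (w - u) = K * (w - e) + K * (e - u) by ring.
  apply: lerD; apply: IH; rewrite ?ltW //.
  - by apply: continuous_subspaceW cf; apply: subset_itv; rewrite bnd_simp ?lexx ?ltW.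
  - move=> t et tw ts; apply: df => //; first exact: lt_trans et.
    by rewrite in_cons negb_or ts gt_eqF.
  - by apply: continuous_subspaceW cf; apply: subset_itv; rewrite bnd_simp ?lexx ?ltW.
  - move=> t ut te ts; apply: df => //; first exact: lt_trans ew.
    by rewrite in_cons negb_or ts lt_eqF.
apply: IH => // t ut tw ts; apply: df => //.
rewrite in_cons negb_or ts andbT.
by apply/eqP => te; move: eI; rewrite -te ut tw.
Qed.

Lemma norm_sub_le_of_is_derive_bounded f s K u w : u <= w ->
  {within `[u, w], continuous f} ->
  (forall t, u < t -> t < w -> t \notin s -> exists2 df, is_derive t 1 f df & `|df| <= K) ->
  `|f w - f u| <= K * (w - u).
Proof.
move=> uw cf df; rewrite ler_norml; apply/andP; split; last first.
  apply: sub_le_of_is_derive_le cf _ => // t ut tw ts.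
  by have [d fd dK] := df t ut tw ts; exists d => //; exact: le_trans (ler_norm d) dK.
have cNf : {within `[u, w], continuous (fun x => - f x)}.
  by move=> x; apply: continuousN; exact: cf.
have := sub_le_of_is_derive_le uw cNf (s := s) (K := K).
have H t : u < t -> t < w -> t \notin s ->
    exists2 d, is_derive t 1 (fun x => - f x) d & d <= K.
  move=> ut tw ts; have [d fd dK] := df t ut tw ts.
  by exists (- d); [exact: is_deriveN | rewrite -normrN in dK; exact: le_trans (ler_norm _) dK].
by move/(_ H); lra.
Qed.

End PiecewiseCalculus.

Lemma switching_times_before_finite (R : realType) (n : nat) (P : {set graph n})
    (sigma : R -> graph n) (t0 taud : R) (ts : nat -> R) :
  switching_signal P sigma t0 taud ts -> 0 < taud ->
  forall w, exists s : seq R, forall l, ts l < w -> ts l \in s.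
Proof.
move=> [_ _ dwell _ _] taud0 w.
have ts_ge l : ts 0%N + l%:R * taud <= ts l.
  elim: l => [|l IH]; first by rewrite mul0r addr0.
  by have := dwell l; rewrite -natr1 mulrDl mul1r; lra.
set N := (Num.truncn (`|w - ts 0%N| / taud)).+1.
exists (map ts (iota 0 N)) => l lw; apply: map_f; rewrite mem_iota add0n /= ltnNge.
apply/negP => Nl.
have : `|w - ts 0%N| < l%:R * taud.
  rewrite -ltr_pdivrMr //; apply: lt_le_trans (truncnS_gt _) _.
  by rewrite -/N ler_nat.
have := ts_ge l; have := ler_norm (w - ts 0%N); lra.
Qed.

Lemma is_derive_sum2 (R : realType) (n m : nat) (h : 'I_n -> 'I_m -> R -> R)
    (dh : 'I_n -> 'I_m -> R) (t : R) :
  (forall i j, is_derive t 1 (h i j) (dh i j)) ->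
  is_derive t 1 (fun s => \sum_(i < n) \sum_(j < m) h i j s) (\sum_(i < n) \sum_(j < m) dh i j).
Proof.
move=> hd.
have -> : (fun s => \sum_(i < n) \sum_(j < m) h i j s) = \sum_(i < n) \sum_(j < m) h i j.
  by apply/funext => s; rewrite fct_sumE; apply: eq_bigr => i _; rewrite fct_sumE.
by apply: is_derive_sum => i; exact: is_derive_sum.
Qed.

Lemma is_derive_coord (R : realType) (m : nat) (f : R -> 'cV[R]_m) (t : R) (j : 'I_m) :
  derivable f t 1 -> is_derive t 1 (fun s => f s j 0) ('D_1 f t j 0).
Proof.
by move=> df; rewrite derive_mx // mxE; apply: derivableP; move/derivable_mxP: df.
Qed.

Lemma continuous_itv_coord (R : realType) (m : nat) (f : R -> 'cV[R]_m) (t0 u w : R)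
    (j : 'I_m) :
  t0 <= u -> {within [set t | t0 <= t], continuous f} ->
  {within `[u, w], continuous (fun t => f t j 0)}.
Proof.
move=> t0u cf; have sub : `[u, w] `<=` [set t | t0 <= t].
  by move=> x; rewrite /= in_itv /= => /andP [ux _]; exact: le_trans ux.
move=> x; apply: (@continuous_comp (subspace `[u, w]) _ _ f (fun M : 'cV[R]_m => M j 0) x).
  exact: (continuous_subspaceW sub cf).
exact: coord_continuous.
Qed.

Lemma continuous_lyapunov_term (T : topologicalType) (R : realType) (k : R) (a b : T -> R) :
  continuous a -> continuous b ->
  continuous (fun t => (a t + b t) ^+ 2 / 2 + (k - 1) / 2 * b t ^+ 2).
Proof.
move=> ca cb.
have csq (f : T -> R) : continuous f -> continuous (fun t => f t ^+ 2).
  by move=> cf t; exact: (continuous_comp (cf t) (@exprn_continuous R 2 (f t))).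
move=> t; apply: (@continuousD _ _ _ (fun t => (a t + b t) ^+ 2 / 2)
  (fun t => (k - 1) / 2 * b t ^+ 2)); apply: continuousM; try exact: cst_continuous.
  exact: (csq _ (fun s => @continuousD _ _ _ a b s (ca s) (cb s)) t).
exact: (csq _ cb t).
Qed.

Lemma is_derive_lyapunov_term (R : realType) (k cc : R) (a b : R -> R) (da db t : R) :
  is_derive t 1 a da -> is_derive t 1 b db ->
  is_derive t 1 (fun s => (a s + (b s - cc)) ^+ 2 / 2 + (k - 1) / 2 * (b s - cc) ^+ 2)
    ((a t + (b t - cc)) * (da + db) + (k - 1) * (b t - cc) * db).
Proof.
move=> Ha Hb; apply: is_derive_eq.
by rewrite !scaler0 !subr0 /GRing.scale /=; field.
Qed.

Lemma continuous_itv_lyapunov (R : realType) (n m : nat) (k : R) (Q V : 'I_n -> R -> 'cV[R]_m)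
    (c : 'cV[R]_m) (t0 u w : R) :
  t0 <= u -> (forall i, {within [set t | t0 <= t], continuous (Q i)}) ->
  (forall i, {within [set t | t0 <= t], continuous (V i)}) ->
  {within `[u, w], continuous (fun t => \sum_(i < n) \sum_(j < m)
     ((V i t j 0 + (Q i t j 0 - c j 0)) ^+ 2 / 2 + (k - 1) / 2 * (Q i t j 0 - c j 0) ^+ 2))}.
Proof.
move=> t0u cQ cV; apply: continuous_sum => i; apply: continuous_sum => j.
apply: continuous_lyapunov_term; first exact: (@continuous_itv_coord _ _ _ _ _ w j t0u (cV i)).
have cq := @continuous_itv_coord _ _ _ _ _ w j t0u (cQ i).
by move=> x; apply: continuousB; [exact: cq | exact: cst_continuous].
Qed.

Lemma eventually_lt_of_dissipation (R : realType) (U Psi phi : R -> R) (T0 L : R) :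
  (forall t, T0 <= t -> 0 <= U t) ->
  (forall s t, T0 <= s -> s <= t -> U t <= U s) ->
  (forall s d eta, T0 <= s -> 0 < d -> (forall t, s <= t -> t <= s + d -> eta <= Psi t) ->
     U (s + d) <= U s - d * eta / 2) ->
  0 <= L -> (forall s t, T0 <= s -> s <= t -> phi s <= phi t + L * (t - s)) ->
  (forall t, T0 <= t -> phi t ^+ 2 <= Psi t) ->
  forall eps, 0 < eps -> \forall s \near +oo, phi s < eps.
Proof.
move=> U0 Umon Udrop L0 phi_lip phi_Psi eps eps0.
set d := eps / (2 * (L + 1)); set eta := eps ^+ 2 / 4.
have d0 : 0 < d by rewrite divr_gt0 //; lra.
have eta0 : 0 < eta by rewrite divr_gt0 // exprn_gt0.
have Ld : L * d <= eps / 2.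
  have LL : L / (L + 1) <= 1 by rewrite ler_pdivrMr ?mul1r; lra.
  have -> : L * d = eps / 2 * (L / (L + 1)) by rewrite /d; field; lra.
  by rewrite ler_piMr //; lra.
(* [phi] stays above [eps / 2] on a window of length [d] after any time where it reaches [eps] *)
have window s : T0 <= s -> eps <= phi s -> forall t, s <= t -> t <= s + d -> eta <= Psi t.
  move=> Ts es t st tsd; apply: le_trans (phi_Psi t _); last lra.
  have : L * (t - s) <= L * d by rewrite ler_wpM2l //; lra.
  have := phi_lip s t Ts st => h1 h2.
  have e2 : eps / 2 <= phi t by lra.
  rewrite /eta; have : 0 <= eps / 2 by lra.
  nra.
set E := [set U t | t in [set t | T0 <= t]].
have hE : has_inf E.
  split; first by exists (U T0), T0 => /=.
  by exists 0 => x [t /= tT <-]; exact: U0.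
have dp : 0 < d * eta / 2 by rewrite divr_gt0 // mulr_gt0.
have [_ [t1 /= t1T <-] t1L] := inf_adherent dp hE.
exists t1; split; first exact: num_real.
move=> s t1s; rewrite ltNge; apply/negP => es.
have sT : T0 <= s by apply: le_trans t1T _; exact: ltW.
have := Udrop s d eta sT d0 (window s sT es).
have := Umon t1 s t1T (ltW t1s).
have : inf E <= U (s + d) by apply: (ge_inf hE.2); exists (s + d) => //=; lra.
lra.
Qed.

Section ClosedLoop.
Variables (R : realType) (n m : nat) (X : 'I_n -> set 'cV[R]_m) (c : 'cV[R]_m).
Variables (F : R -> 'I_n -> 'I_n -> R) (ah k t0 T0 : R) (ts : nat -> R).
Variables (q v : 'I_n -> R -> 'cV[R]_m).

Hypothesis X_closed : forall i, closed (X i).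
Hypothesis X_convex : forall i, convex_cv (X i).
Hypothesis X_c : forall i, X i c.
Hypothesis F_sym : forall t i l, T0 <= t -> F t i l = F t l i.
Hypothesis F_bnd : forall t i l, T0 <= t -> 0 <= F t i l <= ah.
Hypothesis ah_ge0 : 0 <= ah.
Hypothesis k_large : 3 + 4 * n%:R * ah <= k.
Hypothesis t0_lt_T0 : t0 < T0.
Hypothesis ts_finite : forall w, exists s : seq R, forall l, ts l < w -> ts l \in s.
Hypothesis q_cont : forall i, {within [set t | t0 <= t], continuous (q i)}.
Hypothesis v_cont : forall i, {within [set t | t0 <= t], continuous (v i)}.
Hypothesis q_der : forall i t, t0 < t -> derivable (q i) t 1 /\ 'D_1 (q i) t = v i t.

Let r i t := q i t - Defs.proj (X i) (q i t).

Hypothesis v_der : forall i t, t0 < t -> (forall l, t != ts l) ->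
  derivable (v i) t 1 /\
  'D_1 (v i) t = - (k *: v i t + r i t + \sum_(l < n) F t i l *: (q i t - q l t)).

Let lap t := laplacian (F t) (fun i j => q i t j 0).

Let lyap t := \sum_(i < n) \sum_(j < m)
  ((v i t j 0 + (q i t j 0 - c j 0)) ^+ 2 / 2 + (k - 1) / 2 * (q i t j 0 - c j 0) ^+ 2).

Let dissip t := \sum_(i < n) sqnorm (v i t) + \sum_(i < n) sqnorm (r i t).

Let k_ge3 : 3 <= k.
Proof.
by apply: le_trans k_large; rewrite lerDl; apply: mulr_ge0 => //; apply: mulr_ge0.
Qed.

Let k_ge0 : 0 <= k.
Proof. by apply: (le_trans _ k_ge3). Qed.

Let half_k1_ge0 : 0 <= (k - 1) / 2.
Proof. by rewrite divr_ge0 // subr_ge0 (le_trans _ k_ge3) // ler1n. Qed.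

Lemma is_proj_X i x : is_proj (X i) x (Defs.proj (X i) x).
Proof. by apply: is_proj_proj; [exact: X_closed | exists c]. Qed.

Lemma v_is_derive i j t : t0 < t -> (forall l, t != ts l) ->
  is_derive t 1 (fun s => v i s j 0) (- (k * v i t j 0 + r i t j 0 + lap t i j)).
Proof.
move=> tt nts; have [dv Dv] := v_der i tt nts.
apply: is_derive_eq (is_derive_coord j dv) _.
rewrite Dv !mxE summxE; congr (- (_ + _ + _)).
by apply: eq_bigr => l _; rewrite !mxE.
Qed.

Lemma lyap_is_derive_le t : T0 < t -> (forall l, t != ts l) ->
  exists2 df, is_derive t 1 lyap df & df <= - (dissip t / 2).
Proof.
move=> Tt nts; have tt := lt_trans t0_lt_T0 Tt.
have dq i j : is_derive t 1 (fun s => q i s j 0) (v i t j 0).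
  by have [dq <-] := q_der i tt; exact: is_derive_coord.
eexists.
  apply: is_derive_sum2 => i j.
  exact: (is_derive_lyapunov_term k (c j 0) (v_is_derive i j tt nts) (dq i j)).
have r_dot i : \sum_(j < m) r i t j 0 ^+ 2 <= \sum_(j < m) r i t j 0 * (q i t j 0 - c j 0).
  have -> : \sum_(j < m) r i t j 0 * (q i t j 0 - c j 0) = dotp (r i t) (q i t - c).
    by apply: eq_bigr => j _; rewrite !mxE.
  exact: (is_proj_sqnorm_le_dotp (@X_convex i) (@is_proj_X i (q i t)) (X_c i)).
have Tt' : T0 <= t by exact: ltW.
have := @dissipation_le R n m k ah (F t) (fun i j => v i t j 0) (fun i j => r i t j 0)
  (fun i j => q i t j 0) (fun j => c j 0) (fun i l => F_sym i l Tt') (fun i l => F_bnd i l Tt')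
  ah_ge0 r_dot k_large.
rewrite /dissip /sqnorm /= => H; apply: le_trans H _; lra.
Qed.

Lemma lyap_ge0 t : 0 <= lyap t.
Proof.
apply: sumr_ge0 => i _; apply: sumr_ge0 => j _; apply: addr_ge0.
  by rewrite divr_ge0 ?sqr_ge0.
by rewrite mulr_ge0 ?sqr_ge0.
Qed.

Lemma dissip_ge0 t : 0 <= dissip t.
Proof. by rewrite addr_ge0 // sumr_ge0 // => i _; exact: sqnorm_ge0. Qed.

Lemma lyap_sub_le b u w : T0 <= u -> u <= w ->
  (forall t, u < t -> t < w -> b <= dissip t / 2) -> lyap w - lyap u <= - b * (w - u).
Proof.
move=> Tu uw hb; have [s hs] := ts_finite w.
apply: (sub_le_of_is_derive_le (s := s)) => //.
  exact: continuous_itv_lyapunov (le_trans (ltW t0_lt_T0) Tu) q_cont v_cont.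
move=> t ut tw ts_t.
have nts l : t != ts l by apply/eqP => tl; move: ts_t; rewrite tl hs // -tl.
have [df dl dle] := lyap_is_derive_le (le_lt_trans Tu ut) nts.
by exists df => //; have := hb t ut tw; lra.
Qed.

Lemma lyap_nonincreasing s t : T0 <= s -> s <= t -> lyap t <= lyap s.
Proof.
move=> Ts st; have := lyap_sub_le (b := 0) Ts st.
by rewrite oppr0 mul0r subr_le0; apply => x _ _; rewrite divr_ge0 ?dissip_ge0.
Qed.

Lemma lyap_drop s d eta : T0 <= s -> 0 < d ->
  (forall t, s <= t -> t <= s + d -> eta <= dissip t) -> lyap (s + d) <= lyap s - d * eta / 2.
Proof.
move=> Ts d0 he; have sd : s <= s + d by rewrite lerDl ltW.
have := lyap_sub_le (b := eta / 2) Ts sd.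
have -> : s + d - s = d by rewrite addrC addKr.
have hb t : s < t -> t < s + d -> eta / 2 <= dissip t / 2.
  by move=> st tsd; have := he t (ltW st) (ltW tsd); lra.
by move/(_ hb); nra.
Qed.

(* [V] bounds every [|qd_ij|^2 / 6] and [|q_ij - c_j|^2], and [|z| <= 1 + z^2] *)
Let B := 1 + 6 * lyap T0.

Lemma state_bounded i j t : T0 <= t -> `|v i t j 0| <= B /\ `|q i t j 0 - c j 0| <= B.
Proof.
move=> Tt; have U0 := lyap_ge0 T0.
have term : (v i t j 0 + (q i t j 0 - c j 0)) ^+ 2 / 2 + (k - 1) / 2 * (q i t j 0 - c j 0) ^+ 2
    <= lyap T0.
  apply: le_trans (lyap_nonincreasing (lexx T0) Tt); rewrite /lyap.
  apply: (ler_sum2_term (f := fun i j => (v i t j 0 + (q i t j 0 - c j 0)) ^+ 2 / 2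
    + (k - 1) / 2 * (q i t j 0 - c j 0) ^+ 2)) => i' j'.
  apply: addr_ge0; first by rewrite divr_ge0 ?sqr_ge0.
  by rewrite mulr_ge0 ?sqr_ge0.
move: term; set x : R := v i t j 0; set y : R := q i t j 0 - c j 0 => term.
have k3 := k_ge3.
have y2 : y ^+ 2 <= lyap T0 by have := sqr_ge0 (x + y); nra.
have xy2 : (x + y) ^+ 2 <= 2 * lyap T0 by have := sqr_ge0 y; nra.
have x2 : x ^+ 2 <= 6 * lyap T0 by have := sqr_ge0 (x + 2 * y); nra.
have abs_le (z : R) : `|z| <= 1 + z ^+ 2.
  by rewrite -real_normK ?num_real //; have := normr_ge0 z; nra.
by split; apply: le_trans (abs_le _) _; rewrite /B; lra.
Qed.

Lemma B_ge0 : 0 <= B.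
Proof. by have := lyap_ge0 T0; rewrite /B; lra. Qed.

Lemma position_lipschitz i s t : T0 <= s -> s <= t -> enorm (q i s - q i t) <= m%:R * B * (t - s).
Proof.
move=> Ts st; apply: le_trans (enorm_le_sum _) _.
have -> : m%:R * B * (t - s) = \sum_(j < m) B * (t - s).
  by rewrite sumr_const card_ord -mulrA mulr_natl.
apply: ler_sum => j _; rewrite !mxE distrC.
apply: (norm_sub_le_of_is_derive_bounded (f := fun x => q i x j 0) (s := [::])) => //.
  exact: (@continuous_itv_coord _ _ _ _ _ t j (le_trans (ltW t0_lt_T0) Ts) (@q_cont i)).
move=> x sx xt _; have Tx : T0 <= x by rewrite (le_trans Ts) // ltW.
have [dq Dq] := q_der i (lt_le_trans t0_lt_T0 Tx).
exists (v i x j 0); first by rewrite -Dq; exact: is_derive_coord.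
exact: (state_bounded i j Tx).1.
Qed.

Lemma r_bounded i t : T0 <= t -> enorm (r i t) <= m%:R * B.
Proof.
move=> Tt; apply: le_trans ((@is_proj_X i (q i t)).2 c (X_c i)) _.
apply: le_trans (enorm_le_sum _) _.
have -> : m%:R * B = \sum_(j < m) B by rewrite sumr_const card_ord mulr_natl.
apply: ler_sum => j _; rewrite !mxE.
exact: (state_bounded i j Tt).2.
Qed.

Lemma accel_bounded : exists2 L, 0 <= L &
  forall i j t, T0 <= t -> `|k * v i t j 0 + r i t j 0 + lap t i j| <= L.
Proof.
exists (k * B + m%:R * B + n%:R * (ah * (2 * B))).
  by rewrite !addr_ge0 ?mulr_ge0 ?B_ge0.
move=> i j t Tt; apply: le_trans (ler_normD _ _) _; apply: lerD.
  apply: le_trans (ler_normD _ _) _; apply: lerD.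
    by rewrite normrM ger0_norm // ler_wpM2l // (state_bounded i j Tt).1.
  exact: le_trans (coord_le_enorm _ j) (r_bounded i Tt).
apply: le_trans (ler_norm_sum _ _ _) _.
have -> : n%:R * (ah * (2 * B)) = \sum_(l < n) ah * (2 * B).
  by rewrite sumr_const card_ord mulr_natl.
apply: ler_sum => l _.
have /andP [F0 Fa] := F_bnd i l Tt.
rewrite normrM ger0_norm //; apply: ler_pM => //.
have -> : q i t j 0 - q l t j 0 = (q i t j 0 - c j 0) - (q l t j 0 - c j 0).
  by rewrite opprB addrA subrK.
apply: le_trans (ler_normB _ _) _.
by have := (state_bounded i j Tt).2; have := (state_bounded l j Tt).2; lra.
Qed.

Lemma velocity_lipschitz : exists2 L, 0 <= L &
  forall i j s t, T0 <= s -> s <= t -> `|v i t j 0 - v i s j 0| <= L * (t - s).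
Proof.
have [L L0 hL] := accel_bounded; exists L => // i j s t Ts st.
have [ls hls] := ts_finite t.
apply: (norm_sub_le_of_is_derive_bounded (f := fun x => v i x j 0) (s := ls)) => //.
  exact: (@continuous_itv_coord _ _ _ _ _ t j (le_trans (ltW t0_lt_T0) Ts) (@v_cont i)).
move=> x sx xt xls; have Tx : T0 <= x by rewrite (le_trans Ts) // ltW.
have nts l : x != ts l by apply/eqP => xl; move: xls; rewrite xl hls // -xl.
exists (- (k * v i x j 0 + r i x j 0 + lap x i j)).
  exact: v_is_derive (lt_le_trans t0_lt_T0 Tx) nts.
by rewrite normrN; exact: hL.
Qed.

Lemma closed_loop_setdist_cvg0 i : setdist (X i) (q i t) @[t --> +oo] --> 0.
Proof.
have X0 : X i !=set0 by exists c.
apply/cvgr0Pnorm_lt => eps eps0.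
have phi_lip s t : T0 <= s -> s <= t ->
    setdist (X i) (q i s) <= setdist (X i) (q i t) + m%:R * B * (t - s).
  move=> Ts st; rewrite addrC; apply: le_trans (setdist_le_enormD (q i t) _ X0) _.
  by rewrite lerD2r position_lipschitz.
have phi_dissip t : T0 <= t -> setdist (X i) (q i t) ^+ 2 <= dissip t.
  move=> Tt; have d0 := setdist_ge0 (q i t) X0.
  have dr : setdist (X i) (q i t) <= enorm (r i t).
    exact: setdist_le_enorm (@is_proj_X i (q i t)).1.
  apply: le_trans (_ : enorm (r i t) ^+ 2 <= _); first by rewrite ler_pXn2r ?nnegrE ?enorm_ge0.
  rewrite enorm_sqr /dissip -[leLHS]add0r lerD ?sumr_ge0 // => [i' _|]; first exact: sqnorm_ge0.
  by apply: (ler_sum_term (f := fun i => sqnorm (r i t))) => i'; exact: sqnorm_ge0.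
have := eventually_lt_of_dissipation (fun t _ => lyap_ge0 t) lyap_nonincreasing lyap_drop
  (mulr_ge0 (ler0n _ _) B_ge0) phi_lip phi_dissip eps0.
by apply: filterS => s; rewrite ger0_norm // setdist_ge0.
Qed.

Lemma closed_loop_velocity_cvg0 i : v i t @[t --> +oo] --> (0 : 'cV[R]_m).
Proof.
have [L L0 vlip] := velocity_lipschitz.
apply/cvgr0Pnorm_lt => eps eps0.
have : \forall s \near +oo, forall j, `|v i s j 0| < eps.
  apply: filter_forall => j.
  have phi_lip s t : T0 <= s -> s <= t -> `|v i s j 0| <= `|v i t j 0| + L * (t - s).
    move=> Ts st; rewrite -[v i s j 0](subKr (v i t j 0)).
    by apply: le_trans (ler_normB _ _) _; rewrite lerD2l vlip.
  have phi_dissip t : T0 <= t -> `|v i t j 0| ^+ 2 <= dissip t.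
    move=> Tt; rewrite real_normK ?num_real // /dissip -[leLHS]addr0 lerD ?sumr_ge0 //;
      last by move=> i' _; exact: sqnorm_ge0.
    by apply: (ler_sum2_term (f := fun i j => v i t j 0 ^+ 2)) => i' j'; exact: sqr_ge0.
  exact: (eventually_lt_of_dissipation (phi := fun s => `|v i s j 0|)
    (fun t _ => lyap_ge0 t) lyap_nonincreasing lyap_drop L0 phi_lip phi_dissip eps0).
apply: filterS => s hs; rewrite [`|_|]/Num.Def.normr /= mx_normrE.
by apply: bigmax_lt => // -[a b] _ /=; rewrite (ord1 b); exact: hs.
Qed.

End ClosedLoop.

Lemma closed_loop_accel (R : realType) (m : nat) (A : 'M[R]_m) (D Cy y r S : 'cV[R]_m) (k : R) :
  sym_posdef A -> A *m D + Cy = Cy - k *: (A *m y) - A *m r - A *m S ->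
  D = - (k *: y + r + S).
Proof.
move=> [_ Apd] E.
have Az : A *m (D + (k *: y + r + S)) = 0.
  rewrite !mulmxDr -scalemxAr; apply/matrixP => a b.
  by have := congr1 (fun B : 'cV[R]_m => B a b) E; rewrite /= !mxE; lra.
suff z0 : D + (k *: y + r + S) = 0 by apply/eqP; rewrite -addr_eq0 z0.
apply/eqP; apply/negPn/negP => nz.
by have := Apd _ nz; rewrite -mulmxA Az mulmx0 mxE ltxx.
Qed.

Definition active_weight (R : realType) (n : nat) (sigma : R -> graph n)
  (a : 'I_n -> 'I_n -> R -> R) (t : R) (i l : 'I_n) : R :=
  if (i, l) \in sigma t then a i l t else 0.

Lemma active_weight_sym (R : realType) (n : nat) (sigma : R -> graph n)
    (a : 'I_n -> 'I_n -> R -> R) (t : R) (i l : 'I_n) :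
  undirected (sigma t) -> (forall i j, a i j t = a j i t) ->
  active_weight sigma a t i l = active_weight sigma a t l i.
Proof. by move=> [G_sym _] a_sym; rewrite /active_weight G_sym a_sym. Qed.

Lemma active_weight_bnd (R : realType) (n : nat) (sigma : R -> graph n)
    (a : 'I_n -> 'I_n -> R -> R) (t ahigh : R) (i l : 'I_n) :
  0 <= a i l t <= ahigh -> 0 <= active_weight sigma a t i l <= ahigh.
Proof.
rewrite /active_weight => /andP [a0 ah]; case: ifP => _; first by rewrite a0.
by rewrite lexx (le_trans a0).
Qed.

Lemma control_closed_loop (R : realType) (n m : nat) (M : 'I_n -> 'cV[R]_m -> 'M[R]_m)
    (C : 'I_n -> 'cV[R]_m -> 'cV[R]_m -> 'M[R]_m) (X : 'I_n -> set 'cV[R]_m)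
    (sigma : R -> graph n) (a : 'I_n -> 'I_n -> R -> R) (k : R) (q qd : 'I_n -> R -> 'cV[R]_m)
    (i : 'I_n) (t : R) (D : 'cV[R]_m) :
  sym_posdef (M i (q i t)) ->
  M i (q i t) *m D + C i (q i t) (qd i t) *m qd i t = control M C X sigma a k q qd i t ->
  D = - (k *: qd i t + (q i t - Defs.proj (X i) (q i t))
         + \sum_(l < n) active_weight sigma a t i l *: (q i t - q l t)).
Proof.
move=> M_pd E; rewrite (closed_loop_accel M_pd E) big_mkcond /=.
congr (- (_ + _ + _)); apply: eq_bigr => l _.
by rewrite /active_weight /neighbors inE; case: ifP; rewrite ?scale0r.
Qed.

Theorem proposition1 (R : realType) (n m : nat)
    (M : 'I_n -> 'cV[R]_m -> 'M[R]_m)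
    (C : 'I_n -> 'cV[R]_m -> 'cV[R]_m -> 'M[R]_m)
    (X : 'I_n -> set 'cV[R]_m)
    (P : {set graph n}) (sigma : R -> graph n) (t0 taud : R) (ts : nat -> R)
    (a : 'I_n -> 'I_n -> R -> R) (alow ahigh : R) :
  (forall i x, sym_posdef (M i x)) ->
  (forall i, closed (X i)) ->
  (forall i, convex_cv (X i)) ->
  (exists x, forall i, X i x) ->
  ebounded [set x | forall i, X i x] ->
  (forall G, G \in P -> undirected G) ->
  0 < taud ->
  switching_signal P sigma t0 taud ts ->
  (forall i j, {within [set t | t0 <= t], continuous (a i j)}) ->
  (forall i j t, a i j t = a j i t) ->
  0 < alow -> 0 < ahigh ->
  (forall i j t, 0 <= t -> alow <= a i j t /\ a i j t <= ahigh) ->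
  exists kbar : R, forall k : R, 0 < k -> kbar < k ->
  forall q qd : 'I_n -> R -> 'cV[R]_m,
    (forall i, {within [set t | t0 <= t], continuous (q i)}) ->
    (forall i, {within [set t | t0 <= t], continuous (qd i)}) ->
    (forall i t, t0 < t -> derivable (q i) t 1 /\ 'D_1 (q i) t = qd i t) ->
    (forall i t, t0 < t -> (forall l, t != ts l) ->
       derivable (qd i) t 1 /\
       M i (q i t) *m 'D_1 (qd i) t + C i (q i t) (qd i t) *m qd i t
         = control M C X sigma a k q qd i t) ->
    forall i,
      (setdist (X i) (q i t) @[t --> +oo] --> 0) /\
      (qd i t @[t --> +oo] --> (0 : 'cV[R]_m)).
Proof.
move=> M_pd X_closed X_convex [c X_c] _ P_undirected taud_gt0 sigma_sw _ a_sym alow_gt0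
  ahigh_gt0 a_bnd.
exists (3 + 4 * n%:R * ahigh) => k _ k_large q qd q_cont qd_cont q_der qd_der i.
(* the weight bounds are only assumed for t >= 0, the dynamics only for t > t0 *)
pose T0 := Num.max t0 0 + 1.
have t0_lt_T0 : t0 < T0 by have := le_max t0 t0 0; rewrite lexx /T0 => /= ?; lra.
have T0_ge0 : 0 <= T0 by have := le_max 0 t0 0; rewrite lexx orbT /T0 => /= ?; lra.
pose F := active_weight sigma a.
have F_sym t j l : T0 <= t -> F t j l = F t l j.
  move=> Tt; apply: active_weight_sym => //; apply: P_undirected.
  by case: sigma_sw => _ _ _ _ -> //; lra.
have F_bnd t j l : T0 <= t -> 0 <= F t j l <= ahigh.
  by move=> Tt; apply: active_weight_bnd; have [] := a_bnd j l t (le_trans T0_ge0 Tt); lra.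
have qd_der' j t : t0 < t -> (forall l, t != ts l) -> derivable (qd j) t 1 /\
    'D_1 (qd j) t = - (k *: qd j t + (q j t - Defs.proj (X j) (q j t))
                      + \sum_(l < n) F t j l *: (q j t - q l t)).
  by move=> tt nts; have [dqd E] := qd_der j t tt nts; split; last exact: control_closed_loop E.
have ts_finite := switching_times_before_finite sigma_sw taud_gt0.
split.
  exact: closed_loop_setdist_cvg0 X_closed X_convex X_c F_sym F_bnd (ltW ahigh_gt0)
    (ltW k_large) t0_lt_T0 ts_finite q_cont qd_cont q_der qd_der' i.
exact: closed_loop_velocity_cvg0 X_closed X_convex X_c F_sym F_bnd (ltW ahigh_gt0)
  (ltW k_large) t0_lt_T0 ts_finite q_cont qd_cont q_der qd_der' i.
Qed.
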